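(* Let $p$ be a prime and let $G$ be a finite $p$-group. Let $c_p$ be the number of distinct cyclic subgroups of order $p$ of $G$; then $\mathcal{P}^*(G)$ has exactly $c_p$ connected components $H_1,\dots,H_{c_p}$. For each $i$, let $\tilde{H_i}$ denote the subgraph of $\mathcal{P}(G)$ induced on the vertex set $V(H_i)\cup\{1\}$. Then $$\kappa(\mathcal{P}(G))=\kappa(\tilde{H_1})\cdot\kappa(\tilde{H_2})\cdots\kappa(\tilde{H_{c_p}}),$$ where $\kappa(\Gamma)$ denotes the number of spanning trees of a graph $\Gamma$.
   Context: For a finite group $G$, the power graph $\mathcal{P}(G)$ is the simple undirected graph with vertex set $G$, two distinct vertices $x,y$ being adjacent iff $\langle x\rangle\subseteq\langle y\rangle$ or $\langle y\rangle\subseteq\langle x\rangle$. $\mathcal{P}^*(G)$ denotes the graph obtained from $\mathcal{P}(G)$ by deleting the vertex $1$. *)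

From Stdlib Require Import ClassicalEpsilon.
From mathcomp Require Import all_boot all_order all_fingroup all_solvable.
Set Implicit Arguments. Unset Strict Implicit. Unset Printing Implicit Defensive.
Local Open Scope group_scope.

Definition pbool (P : Prop) : bool :=
  if excluded_middle_informative P then true else false.

Section Graphs.
Variable T : finType.

(* A simple graph on T is given by an adjacency relation [adj];
   a subgraph "induced on S" has vertex set S and all adj-edges inside S.
   Edge sets are sets of 2-element subsets {x,y}. *)
Definition edge_rel (E : {set {set T}}) : rel T := fun a b => [set a; b] \in E.

Definition is_spanning_tree (adj : rel T) (S : {set T}) (E : {set {set T}}) : Prop :=
  (forall e, e \in E -> exists x y, [/\ x \in S, y \in S, x != y, adj x y & e = [set x; y]]) /\
  (forall x y, x \in S -> y \in S -> connect (edge_rel E) x y) /\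
  (forall s : seq T, uniq s -> 2 < size s -> ~~ path.cycle (edge_rel E) s).

Definition kappa (adj : rel T) (S : {set T}) : nat :=
  #|[set E : {set {set T}} | pbool (is_spanning_tree adj S E)]|.

Definition induced_rel (adj : rel T) (S : {set T}) : rel T :=
  fun a b => [&& a \in S, b \in S & adj a b].

Definition components (adj : rel T) (S : {set T}) : {set {set T}} :=
  [set [set y in S | connect (induced_rel adj S) x y] | x in S].

End Graphs.

Definition power_adj (gT : finGroupType) : rel gT :=
  fun x y => (x != y) && ((<[x]> \subset <[y]>) || (<[y]> \subset <[x]>)).

Definition num_cyclic_subgroups (gT : finGroupType) (G : {set gT}) (p : nat) : nat :=
  #|[set <[x]> | x in G & #[x] == p]|.

From mathcomp Require Import all_boot all_order all_fingroup all_solvable.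
From Stdlib Require Import ClassicalEpsilon.
Set Implicit Arguments. Unset Strict Implicit. Unset Printing Implicit Defensive.

(* In a p-group every nontrivial cyclic subgroup contains exactly one subgroup
   of order p, and if x and z are adjacent in the power graph then a subgroup P
   of order p lies in <[x]> iff it lies in <[z]>.  Hence the components of
   P*(G) are the sets {y <> 1 | P <= <[y]>}, one for each subgroup P of order p.
   In P(G) the identity is a cut vertex joining these components, and the
   spanning trees of a graph glued from two pieces along a single vertex are
   exactly the unions of a spanning tree of each piece, so kappa multiplies. *)

Lemma pboolP (P : Prop) : reflect P (pbool P).
Proof. by rewrite /pbool; case: excluded_middle_informative => h; constructor. Qed.

Section SpanningTrees.
Variables (T : finType) (adj : rel T).
Implicit Types (S A B : {set T}) (E : {set {set T}}) (v x y : T).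

Definition edges_in S E :=
  forall e, e \in E -> exists x y, [/\ x \in S, y \in S, x != y, adj x y & e = [set x; y]].

Definition restr_edges A E := [set e in E | e \subset A].

Lemma spanning_tree_edges S E : is_spanning_tree adj S E -> edges_in S E.
Proof. by case. Qed.

Lemma edge_relC E : symmetric (edge_rel E).
Proof. by move=> a b; rewrite /edge_rel setUC. Qed.

Lemma edge_rel_edges_in S E a b :
  edges_in S E -> edge_rel E a b -> [/\ a \in S, b \in S & a != b].
Proof.
move=> SE /SE [x [y [xS yS xy _ eab]]].
have inS z : z \in [set a; b] -> z \in S by rewrite eab !inE => /orP[]/eqP->.
split; [exact/inS/set21 | exact/inS/set22 | ].
apply/negP => /eqP ab; move/setP: eab => eab.
move: (eab x) (eab y); rewrite ab !inE !orbb !eqxx !orbT => /eqP xb /eqP yb.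
by rewrite xb yb eqxx in xy.
Qed.

Lemma setI_set1_eq A B v x : A :&: B = [set v] -> x \in A -> x \in B -> x = v.
Proof. by move=> AB xA xB; apply/set1P; rewrite -AB inE xA. Qed.

Lemma setI_set1_mem A B v : A :&: B = [set v] -> v \in A /\ v \in B.
Proof. by move=> AB; apply/setIP; rewrite AB set11. Qed.

Lemma path_within A B v E x s :
  A :&: B = [set v] -> {in E, forall e : {set T}, (e \subset A) || (e \subset B)} ->
  path (edge_rel E) x s -> x \in A -> v \notin x :: s -> {subset x :: s <= A}.
Proof.
move=> AB sideE; elim: s x => [|y s IH] x /=.
  by move=> _ xA _ z; rewrite inE => /eqP->.
case/andP=> exy pys xA; rewrite in_cons negb_or => /andP[vx vys].
have yA : y \in A.
  case/orP: (sideE _ exy); rewrite subUset !sub1set => /andP[// xB _].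
  by rewrite (setI_set1_eq AB xA xB) eqxx in vx.
by move=> z; rewrite in_cons => /orP[/eqP-> // | ]; apply: IH.
Qed.

Lemma path_within_side A B v E x s :
  A :&: B = [set v] -> {in E, forall e : {set T}, (e \subset A) || (e \subset B)} ->
  path (edge_rel E) x s -> x \in A :|: B -> v \notin x :: s ->
  {subset x :: s <= A} \/ {subset x :: s <= B}.
Proof.
move=> AB sideE pxs /setUP[xA | xB] vxs; [left | right].
  exact: path_within AB sideE pxs xA vxs.
have BA : B :&: A = [set v] by rewrite setIC.
by apply: (path_within BA _ pxs xB vxs) => e /sideE; rewrite orbC.
Qed.

Lemma cycle_within A B v E s :
  A :&: B = [set v] -> {in E, forall e : {set T}, (e \subset A) || (e \subset B)} ->
  edges_in (A :|: B) E -> uniq s -> path.cycle (edge_rel E) s ->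
  {subset s <= A} \/ {subset s <= B}.
Proof.
move=> AB sideE EAB; have [vA vB] := setI_set1_mem AB.
case: (boolP (v \in s)) => [vs | vNs] us cs; last first.
  case: s vNs us cs => [|y t] vNs _; first by left.
  rewrite /= rcons_path => /andP[pyt eyy].
  have [_ yAB _] := edge_rel_edges_in EAB eyy.
  exact: path_within_side AB sideE pyt yAB vNs.
have [i s' rs] := rot_to vs.
suff : {subset v :: s' <= A} \/ {subset v :: s' <= B}.
  by case=> sub; [left | right] => z zs; apply: sub; rewrite -rs mem_rot.
move: us cs; rewrite -(rot_uniq i) -(rot_cycle i) {}rs.
case: s' => [|y t] /=; first by left => z; rewrite inE => /eqP->.
rewrite rcons_path => /andP[vNyt _] /and3P[evy pyt _].
have [_ yAB _] := edge_rel_edges_in EAB evy.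
have [sub | sub] := path_within_side AB sideE pyt yAB vNyt; [left | right];
  by move=> z; rewrite in_cons => /orP[/eqP-> // | ]; apply: sub.
Qed.

Lemma path_restr_edges A E x s :
  {subset x :: s <= A} -> path (edge_rel E) x s -> path (edge_rel (restr_edges A E)) x s.
Proof.
move=> sA; apply: (sub_in_path (P := mem A)); last exact/allP.
by move=> a b aA bA; rewrite /edge_rel inE => ->; rewrite subUset !sub1set aA bA.
Qed.

Lemma cycle_restr_edges A E s :
  {subset s <= A} -> path.cycle (edge_rel E) s -> path.cycle (edge_rel (restr_edges A E)) s.
Proof.
move=> sA; apply: (sub_in_cycle (P := mem A)); last exact/allP.
by move=> a b aA bA; rewrite /edge_rel inE => ->; rewrite subUset !sub1set aA bA.
Qed.

Lemma restr_edges_setU S1 S2 v E1 E2 :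
  S1 :&: S2 = [set v] -> edges_in S1 E1 -> edges_in S2 E2 ->
  restr_edges S1 (E1 :|: E2) = E1.
Proof.
move=> S12 E1S1 E2S2; apply/setP => e; rewrite !inE.
case e1: (e \in E1) => /=.
  by have [x [y [xS yS _ _ ->]]] := E1S1 e e1; rewrite subUset !sub1set xS yS.
apply/negP => /andP[/E2S2 [x [y [x2 y2 xy _ ->]]]].
rewrite subUset !sub1set => /andP[x1 y1].
by rewrite (setI_set1_eq S12 x1 x2) (setI_set1_eq S12 y1 y2) eqxx in xy.
Qed.

Lemma setU_restr_edges A B E :
  {in E, forall e : {set T}, (e \subset A) || (e \subset B)} ->
  restr_edges A E :|: restr_edges B E = E.
Proof. by move=> sideE; apply/setP => e; rewrite !inE -andb_orr; apply/andb_idr/sideE. Qed.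

Lemma edges_in_side S1 S2 v E :
  S1 :&: S2 = [set v] ->
  {in S1 :\ v & S2 :\ v, forall x y, ~~ adj x y && ~~ adj y x} ->
  edges_in (S1 :|: S2) E -> {in E, forall e : {set T}, (e \subset S1) || (e \subset S2)}.
Proof.
move=> S12 cross ES e /ES [x [y [xS yS _ axy ->]]].
have [v1 v2] := setI_set1_mem S12.
rewrite !subUset !sub1set.
have [-> | xv] := eqVneq x v; first by case/setUP: yS => ->; rewrite v1 v2 ?orbT.
have [-> | yv] := eqVneq y v; first by case/setUP: xS => ->; rewrite v1 v2 ?orbT.
have noadj a b : a \in S1 -> b \in S2 -> a != v -> b != v -> ~~ adj a b && ~~ adj b a.
  by move=> a1 b2 av bv; apply: cross; apply/setD1P.
case/setUP: xS => [x1 | x2]; case/setUP: yS => [y1 | y2]; rewrite ?x1 ?y1 ?x2 ?y2 ?orbT //.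
  by case/andP: (noadj x y x1 y2 xv yv); rewrite axy.
by case/andP: (noadj y x y1 x2 yv xv); rewrite axy.
Qed.

Lemma union_spanning_tree S1 S2 v E1 E2 :
  S1 :&: S2 = [set v] ->
  is_spanning_tree adj S1 E1 -> is_spanning_tree adj S2 E2 ->
  is_spanning_tree adj (S1 :|: S2) (E1 :|: E2).
Proof.
move=> S12 [E1S1 [conn1 acyc1]] [E2S2 [conn2 acyc2]].
have S21 : S2 :&: S1 = [set v] by rewrite setIC.
have E12 : edges_in (S1 :|: S2) (E1 :|: E2).
  by move=> e /setUP[/E1S1 | /E2S2] [x [y [xS yS xy axy ->]]];
    exists x, y; split; rewrite // inE ?xS ?yS ?orbT.
have sideE : {in E1 :|: E2, forall e : {set T}, (e \subset S1) || (e \subset S2)}.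
  by move=> e /setUP[/E1S1 | /E2S2] [x [y [xS yS _ _ ->]]];
    rewrite !subUset !sub1set xS yS ?orbT.
have lift E : E \subset E1 :|: E2 ->
    subrel (connect (edge_rel E)) (connect (edge_rel (E1 :|: E2))).
  by move/subsetP=> sE; apply: connect_sub => a b /sE eab; apply: connect1.
have to_v z : z \in S1 :|: S2 -> connect (edge_rel (E1 :|: E2)) z v.
  have [v1 v2] := setI_set1_mem S12.
  case/setUP=> zS; [exact: lift (subsetUl E1 E2) _ _ (conn1 z v zS v1) |
                    exact: lift (subsetUr E1 E2) _ _ (conn2 z v zS v2)].
split=> //; split.
  move=> x y xS yS; apply: connect_trans (to_v x xS) _.
  by rewrite (sym_connect_sym (@edge_relC _)); apply: to_v.
move=> s us ss; apply/negP => cs.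
have [sub | sub] := cycle_within S12 sideE E12 us cs.
  move/negP: (acyc1 s us ss); apply.
  by rewrite -(restr_edges_setU S12 E1S1 E2S2); apply: cycle_restr_edges sub cs.
move/negP: (acyc2 s us ss); apply.
by rewrite -(restr_edges_setU S21 E2S2 E1S1) setUC; apply: cycle_restr_edges sub cs.
Qed.

Lemma restr_spanning_tree S1 S2 v E :
  S1 :&: S2 = [set v] ->
  {in S1 :\ v & S2 :\ v, forall x y, ~~ adj x y && ~~ adj y x} ->
  is_spanning_tree adj (S1 :|: S2) E -> is_spanning_tree adj S1 (restr_edges S1 E).
Proof.
move=> S12 cross [ES [conn acyc]].
have [v1 v2] := setI_set1_mem S12.
have sideE := edges_in_side S12 cross ES.
have to_v x : x \in S1 -> connect (edge_rel (restr_edges S1 E)) x v.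
  move=> x1; case: (eqVneq x v) => [-> | xv]; first exact: connect0.
  (* A duplicate-free tree path from x to v meets v only at its end, so it stays in S1. *)
  have /connectP[p pth] : connect (edge_rel E) x v by apply: conn; rewrite inE ?x1 ?v1.
  case/shortenP: pth => p' pth' up _.
  case/lastP: p' pth' up => [|q y] pth' up /=; first by move=> vx; rewrite vx eqxx in xv.
  rewrite last_rcons => vy; subst y.
  move: up; rewrite -rcons_cons rcons_uniq => /andP[vNxq _].
  move: (pth'); rewrite rcons_path => /andP[pq _].
  have xqS1 := path_within S12 sideE pq x1 vNxq.
  apply/connectP; exists (rcons q v); last by rewrite last_rcons.
  apply: path_restr_edges pth' => z; rewrite -rcons_cons mem_rcons in_cons.
  by case/orP=> [/eqP-> | /xqS1].
split.
  move=> e; rewrite inE => /andP[/ES [x [y [_ _ xy axy ->]]]].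
  by rewrite subUset !sub1set => /andP[x1 y1]; exists x, y.
split.
  move=> x y x1 y1; apply: connect_trans (to_v x x1) _.
  by rewrite (sym_connect_sym (@edge_relC _)); apply: to_v.
move=> s us ss; apply: contra (acyc s us ss); apply: sub_cycle => a b.
by rewrite /edge_rel inE => /andP[].
Qed.

Lemma kappa_glue S1 S2 v :
  S1 :&: S2 = [set v] ->
  {in S1 :\ v & S2 :\ v, forall x y, ~~ adj x y && ~~ adj y x} ->
  kappa adj (S1 :|: S2) = kappa adj S1 * kappa adj S2.
Proof.
move=> S12 cross.
have S21 : S2 :&: S1 = [set v] by rewrite setIC.
have cross21 : {in S2 :\ v & S1 :\ v, forall x y, ~~ adj x y && ~~ adj y x}.
  by move=> x x2 y y1; rewrite andbC; apply: cross.
rewrite /kappa -cardsX; set D := setX _ _.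
have -> : [set E | pbool (is_spanning_tree adj (S1 :|: S2) E)] = [set P.1 :|: P.2 | P in D].
  apply/setP => E; rewrite inE; apply/pboolP/imsetP => [tE | [[E1 E2]]].
    exists (restr_edges S1 E, restr_edges S2 E).
      rewrite !inE /=; apply/andP; split; apply/pboolP; first exact: restr_spanning_tree S12 cross tE.
      by apply: restr_spanning_tree S21 cross21 _; rewrite setUC.
    by rewrite (setU_restr_edges (edges_in_side S12 cross (spanning_tree_edges tE))).
  rewrite !inE /= => /andP[/pboolP t1 /pboolP t2] ->.
  exact: union_spanning_tree S12 t1 t2.
apply: card_in_imset => -[E1 E2] [E1' E2']; rewrite !inE /=.
move=> /andP[/pboolP /spanning_tree_edges t1 /pboolP /spanning_tree_edges t2].
move=> /andP[/pboolP /spanning_tree_edges t1' /pboolP /spanning_tree_edges t2'] eqE.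
congr pair.
  by rewrite -(restr_edges_setU S12 t1 t2) eqE (restr_edges_setU S12 t1' t2').
by rewrite -(restr_edges_setU S21 t2 t1) setUC eqE setUC (restr_edges_setU S21 t2' t1').
Qed.

Lemma kappa_set1 v : kappa adj [set v] = 1.
Proof.
rewrite /kappa -(cards1 (set0 : {set {set T}})); congr #|pred_of_set _|.
apply/setP => E; rewrite !inE; apply/pboolP/eqP => [[ES _] | ->].
  apply/setP => e; rewrite inE; apply/negP => /ES [x [y [xv yv xy _ _]]].
  by move: xv yv xy; rewrite !inE => /eqP-> /eqP->; rewrite eqxx.
split; first by move=> e; rewrite inE.
split; first by move=> x y; rewrite !inE => /eqP-> /eqP->; apply: connect0.
by move=> [|x [|y s]] //= _ _; rewrite /edge_rel inE.
Qed.

End SpanningTrees.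

Section Components.
Variables (T : finType) (adj : rel T).
Hypothesis adj_sym : symmetric adj.
Implicit Types (S H : {set T}) (v : T).

Lemma induced_relC S : symmetric (induced_rel adj S).
Proof. by move=> a b; rewrite /induced_rel andbA [(a \in S) && _]andbC -andbA adj_sym. Qed.

Lemma components_sub S H : H \in components adj S -> H \subset S.
Proof. by case/imsetP => x _ ->; apply/subsetP => y; rewrite inE => /andP[]. Qed.

Lemma cover_components S : cover (components adj S) = S.
Proof.
apply/setP => x; apply/bigcupP/idP => [[H /components_sub /subsetP HS /HS //] | xS].
exists [set y in S | connect (induced_rel adj S) x y]; first exact: imset_f.
by rewrite inE xS connect0.
Qed.

Lemma components_eq S H H' z :
  H \in components adj S -> H' \in components adj S -> z \in H -> z \in H' -> H = H'.
Proof.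
have Cxy := sym_connect_sym (induced_relC S).
case/imsetP => x _ -> /imsetP[x' _ ->]; rewrite !inE => /andP[zS xz] /andP[_ x'z].
apply/setP => y; rewrite !inE; apply: andb_id2l => yS.
apply/idP/idP => [xy | x'y].
  by apply: connect_trans x'z _; apply: connect_trans _ xy; rewrite Cxy.
by apply: connect_trans xz _; apply: connect_trans _ x'y; rewrite Cxy.
Qed.

Lemma components_adj_eq S H H' a b :
  H \in components adj S -> H' \in components adj S ->
  a \in H -> b \in H' -> adj a b -> H = H'.
Proof.
move=> CH CH' aH bH ab; have bS : b \in S by apply: subsetP (components_sub CH') _ bH.
apply: (components_eq CH CH' _ bH).
move: CH aH => /imsetP[x _ ->]; rewrite !inE bS => /andP[aS xa].
by apply: connect_trans xa (connect1 _); rewrite /induced_rel aS bS.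
Qed.

Lemma kappa_setU1_bigcup S v (s : seq {set T}) :
  uniq s -> {subset s <= components adj S} ->
  kappa adj (v |: \bigcup_(H <- s) H) = \prod_(H <- s) kappa adj (H :|: [set v]).
Proof.
elim: s => [|H s IH]; first by rewrite !big_nil setU0 kappa_set1.
rewrite /= => /andP[Hs us] sC; have CH := sC H (mem_head H s).
have {}sC : {subset s <= components adj S} by move=> H' H's; apply/sC/mem_behead.
rewrite !big_cons -(IH us sC).
have inU y : y \in \bigcup_(H' <- s) H' -> exists2 H', H' \in s & y \in H'.
  by rewrite bigcup_seq => /bigcupP.
have -> : v |: (H :|: \bigcup_(H' <- s) H') = (H :|: [set v]) :|: (v |: \bigcup_(H' <- s) H').
  by apply/setP => z; rewrite !inE; case: (z == v); case: (z \in H).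
apply: (kappa_glue (v := v)).
  apply/setP => z; rewrite !inE; case: (eqVneq z v) => [-> | _]; rewrite ?orbT ?orbF //=.
  apply/negP => /andP[zH /inU[H' H's zH']].
  by move: Hs; rewrite (components_eq CH (sC _ H's) zH zH') H's.
move=> x y /setD1P[xv] /setUP[xH | /set1P xv']; last by rewrite xv' eqxx in xv.
case/setD1P=> yv /setU1P[yv' | /inU[H' H's yH']]; first by rewrite yv' eqxx in yv.
have Hne : H != H' by apply: contraNneq Hs => ->.
rewrite [adj y x]adj_sym andbb; apply: contra Hne => xy.
by rewrite (components_adj_eq CH (sC _ H's) xH yH' xy).
Qed.

Lemma kappa_cut_vertex S v :
  kappa adj (v |: S) = \prod_(H in components adj S) kappa adj (H :|: [set v]).
Proof.
rewrite -big_enum -(@kappa_setU1_bigcup S) ?enum_uniq //; last by move=> H; rewrite mem_enum.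
by rewrite big_enum -/(cover _) cover_components.
Qed.

End Components.

Local Open Scope group_scope.

Lemma power_adj_sym (gT : finGroupType) : symmetric (@power_adj gT).
Proof. by move=> x y; rewrite /power_adj eq_sym orbC. Qed.

Section PGroupPowerGraph.
Variables (gT : finGroupType) (p : nat) (G : {group gT}).
Hypotheses (p_pr : prime p) (pG : p.-group G).

Local Notation order_p_cycles := [set <[x]> | x in G & #[x] == p].
Local Notation Rstar := (induced_rel (@power_adj gT) (G^#)).

Lemma cycle_order_p_elem y : y \in G -> y != 1 -> exists2 q, q \in <[y]> & #[q] = p.
Proof.
move=> yG y1; have pY : p.-group <[y]> by apply: pgroupS pG; rewrite cycle_subG.
have [|_ p_dvd _] := pgroup_pdiv pY; first by rewrite cycle_eq1.
by have [q qY oq] := Cauchy p_pr p_dvd; exists q.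
Qed.

Lemma mem_order_p_cycles P :
  P \in order_p_cycles -> exists w, [/\ P = <[w]>, w \in G^# & #[w] = p].
Proof.
case/imsetP=> w; rewrite inE => /andP[wG /eqP ow] ->; exists w; split=> //.
by rewrite !inE wG andbT -order_gt1 ow prime_gt1.
Qed.

Lemma order_p_cycle_subset_adj x z P :
  P \in order_p_cycles -> P \subset <[x]> -> z \in G^# -> power_adj x z ->
  P \subset <[z]>.
Proof.
move=> /mem_order_p_cycles[w [-> _ ow]] wx /setD1P[z1 zG] /andP[_ /orP[xz | zx]].
  exact: subset_trans wx xz.
have [q qz oq] := cycle_order_p_elem zG z1.
have qx : <[q]> \subset <[x]> by apply: subset_trans zx; rewrite cycle_subG.
suff /eqP-> : <[w]> :==: <[q]> by rewrite cycle_subG.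
by rewrite (eq_subG_cyclic (cycle_cyclic x) wx qx) -/#[w] -/#[q] ow oq.
Qed.

Lemma connect_power_adj x y P :
  x \in G^# -> y \in G^# -> P \in order_p_cycles -> P \subset <[x]> ->
  connect Rstar x y = (P \subset <[y]>).
Proof.
move=> xS yS PX Px; apply/idP/idP => [/connectP[s ps ->{y yS}] | ].
  elim: s x xS Px ps => [|z s IH] x xS Px //= /andP[/and3P[_ zS xz] ps].
  exact: IH zS (order_p_cycle_subset_adj PX Px zS xz) ps.
have [w [eP wS _]] := mem_order_p_cycles PX; rewrite eP in Px *.
have to_w u : u \in G^# -> <[w]> \subset <[u]> -> connect Rstar u w.
  move=> uS wu; case: (eqVneq u w) => [-> | uw]; first exact: connect0.
  by apply: connect1; rewrite /induced_rel uS wS /power_adj uw wu orbT.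
move=> wy; apply: connect_trans (to_w x xS Px) _.
by rewrite (sym_connect_sym (induced_relC (@power_adj_sym gT) _)); apply: to_w.
Qed.

Lemma components_power_graph :
  components (@power_adj gT) (G^#) =
  [set [set y in G^# | P \subset <[y]>] | P : {set gT} in order_p_cycles].
Proof.
apply/setP => H; apply/imsetP/imsetP => [[x xS ->] | [P PX ->]].
  have [x1 xG] := setD1P xS; have [q qx oq] := cycle_order_p_elem xG x1.
  have qG : q \in G by apply: subsetP qx; rewrite cycle_subG.
  have PX : <[q]> \in order_p_cycles by rewrite imset_f // inE qG oq /=.
  exists <[q]> => //; apply: eq_finset => y; apply: andb_id2l => yS.
  by rewrite (connect_power_adj xS yS PX) // cycle_subG.
have [w [eP wS _]] := mem_order_p_cycles PX.
exists w => //; apply: eq_finset => y; apply: andb_id2l => yS.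
by rewrite (connect_power_adj wS yS PX) eP ?subxx.
Qed.

Lemma card_components_power_graph :
  #|components (@power_adj gT) (G^#)| = #|order_p_cycles|.
Proof.
rewrite components_power_graph; apply: card_in_imset => P P' PX P'X eqPP'.
have [w [eP wS ow]] := mem_order_p_cycles PX.
have [w' [eP' _ ow']] := mem_order_p_cycles P'X.
have : w \in [set y in G^# | P \subset <[y]>] by rewrite inE wS eP subxx.
rewrite eqPP' inE eP' => /andP[_ ww'].
by apply/eqP; rewrite eP eq_sym eqEcard ww' -/#[w] -/#[w'] ow ow' /=.
Qed.

End PGroupPowerGraph.

(* P(G): vertex set G with power_adj;  P*(G): vertex set G^# = G :\ 1.
   For each component H of P*(G), ~H is the induced subgraph on H :|: [set 1]. *)
Theorem corollary3p2 (gT : finGroupType) (p : nat) (G : {group gT}) :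
  prime p -> p.-group G ->
  #|components (@power_adj gT) (G :\ (1%g : gT))| = num_cyclic_subgroups G p /\
  kappa (@power_adj gT) G =
    (\prod_(H in components (@power_adj gT) (G :\ (1%g : gT)))
        kappa (@power_adj gT) ((H : {set gT}) :|: [set 1%g : gT]))%N.
Proof.
move=> p_pr pG; split; first exact: card_components_power_graph.
by rewrite -{1}(setD1K (group1 G)) (kappa_cut_vertex (@power_adj_sym gT)).
Qed.
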